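(* For any pair of probability distributions $P,Q$ on a common countable set, $$C(P,Q)\ \ge\ -\tfrac12\log\!\left(1-\big(d_{\mathrm{TV}}(P,Q)\big)^2\right),$$ and for each value $\varepsilon\in[0,1)$ of $d_{\mathrm{TV}}(P,Q)$ there exist $P,Q$ with $d_{\mathrm{TV}}(P,Q)=\varepsilon$ attaining equality.
   Context: $d_{\mathrm{TV}}(P,Q)=\frac12\sum_x |P(x)-Q(x)|$; the Chernoff information is $C(P,Q)=-\min_{\lambda\in[0,1]}\log\left(\sum_x P(x)^{\lambda}Q(x)^{1-\lambda}\right)$ (with $\log 0=-\infty$; the right-hand side is $+\infty$ when $d_{\mathrm{TV}}=1$). Logarithms are natural. *)

From Stdlib Require Import Reals.
Open Scope R_scope.

(* The common countable set is represented by nat (every countable set,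
   finite or infinite, embeds into nat; pad with zero mass). *)

Definition is_distr (P : nat -> R) : Prop :=
  (forall x, 0 <= P x) /\ infinite_sum P 1.

Definition is_tv (P Q : nat -> R) (d : R) : Prop :=
  exists t, infinite_sum (fun x => Rabs (P x - Q x)) t /\ d = t / 2.

(* Real power x^y for x >= 0, with the convention 0^y = 0 for all y
   (i.e. the Chernoff sum ranges over the common support of the factors). *)
Definition pw (x y : R) : R :=
  if Rle_dec x 0 then 0 else Rpower x y.

Definition is_bsum (P Q : nat -> R) (lam b : R) : Prop :=
  infinite_sum (fun x => pw (P x) lam * pw (Q x) (1 - lam)) b.

Inductive ER : Type := Fin (r : R) | PInf.

Definition ER_le (a b : ER) : Prop :=
  match a, b with
  | Fin x, Fin y => x <= y
  | _, PInf => True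
  | PInf, Fin _ => False
  end.

Definition ER_scale (c : R) (a : ER) : ER :=
  match a with Fin x => Fin (c * x) | PInf => PInf end.

(* -log x, with log 0 = -infinity (arguments here are >= 0). *)
Definition neglog (x : R) : ER :=
  if Rle_dec x 0 then PInf else Fin (- ln x).

(* c is the Chernoff information
   C(P,Q) = - min_{lam in [0,1]} log (sum_x P(x)^lam Q(x)^(1-lam)),
   i.e. m is the minimum over [0,1] of the sum and c = -log m. *)
Definition is_chernoff (P Q : nat -> R) (c : ER) : Prop :=
  exists m,
    (exists lam, 0 <= lam <= 1 /\ is_bsum P Q lam m) /\
    (forall lam b, 0 <= lam <= 1 -> is_bsum P Q lam b -> m <= b) /\
    c = neglog m.

Definition tv_bound (d : R) : ER := ER_scale (1/2) (neglog (1 - d^2)).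

(* The Chernoff sum B(l) = sum_x P(x)^l Q(x)^(1-l) is dominated termwise by
   P + Q, so it is continuous on [0,1] and attains its minimum m there; in
   particular m <= B(1/2) = BC, the Bhattacharyya coefficient.  Summing the
   pointwise bound 2 |p - q| <= t (sqrt p - sqrt q)^2 + (sqrt p + sqrt q)^2 / t
   gives 2 d <= t (1 - BC) + (1 + BC) / t for every t > 0, and optimising in t
   yields Le Cam's inequality d^2 <= 1 - BC^2.  Hence
   -log m >= -log BC >= -1/2 log (1 - d^2).
   Equality holds for P = ((1+e)/2, (1-e)/2) and Q = ((1-e)/2, (1+e)/2): the
   two terms of their Chernoff sum have constant product (1 - e^2)/4, so by
   AM-GM the sum is minimal at l = 1/2, where it equals sqrt (1 - e^2). *)
From Stdlib Require Import Reals Lra Psatz.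
Open Scope R_scope.

Lemma infinite_sum_ext (f g : nat -> R) (l : R) :
  (forall x, f x = g x) -> infinite_sum f l -> infinite_sum g l.
Proof.
  intros Hfg Hf. apply (Un_cv_ext (fun n => sum_f_R0 f n)); [|exact Hf].
  intro n. apply sum_eq. auto.
Qed.

Lemma infinite_sum_lincomb (f g : nat -> R) (A B a b : R) :
  infinite_sum f A -> infinite_sum g B ->
  infinite_sum (fun x => a * f x + b * g x) (a * A + b * B).
Proof.
  intros Hf Hg.
  apply (Un_cv_ext (fun n => a * sum_f_R0 f n + b * sum_f_R0 g n)).
  - intro n. induction n as [|n IH]; simpl; [ring|]. rewrite <- IH. ring.
  - apply CV_plus; apply (continuity_seq (fun y => _ * y)); auto; reg.
Qed.

Lemma infinite_sum_le (f g : nat -> R) (A B : R) :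
  (forall x, f x <= g x) -> infinite_sum f A -> infinite_sum g B -> A <= B.
Proof.
  intros Hfg Hf Hg. apply (@Rle_cv_lim (fun n => sum_f_R0 f n) (fun n => sum_f_R0 g n)); auto.
  intro n. apply sum_Rle. auto.
Qed.

Lemma infinite_sum_supp2 (f : nat -> R) :
  (forall n, (2 <= n)%nat -> f n = 0) -> infinite_sum f (f 0%nat + f 1%nat).
Proof.
  intros Hf.
  assert (Hsum : forall n, (1 <= n)%nat -> sum_f_R0 f n = f 0%nat + f 1%nat).
  { intros n Hn. induction n as [|n IH]; [lia|]. destruct n as [|n]; [reflexivity|].
    rewrite tech5, IH, (Hf (S (S n))) by lia. ring. }
  intros e He. exists 1%nat. intros n Hn. unfold R_dist.
  rewrite Hsum, Rminus_diag, Rabs_R0 by lia. exact He.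
Qed.

Lemma infinite_sum_nonneg (f : nat -> R) (A : R) :
  (forall x, 0 <= f x) -> infinite_sum f A -> 0 <= A.
Proof.
  intros Hf HA. apply (@Rle_cv_lim (fun _ => 0) (fun n => sum_f_R0 f n)); auto.
  - intro n. now apply cond_pos_sum.
  - intros e He. exists 0%nat. intros. unfold R_dist. rewrite Rminus_diag, Rabs_R0. lra.
Qed.

Lemma pw_nonneg (p y : R) : 0 <= pw p y.
Proof. unfold pw. destruct Rle_dec; [lra|]. left. apply exp_pos. Qed.

Lemma pw_pos_eq (p y : R) : 0 < p -> pw p y = Rpower p y.
Proof. intro Hp. unfold pw. destruct Rle_dec; [lra|reflexivity]. Qed.

Lemma pw_half (p : R) : 0 <= p -> pw p (1/2) = sqrt p.
Proof.
  intro Hp. unfold pw. destruct Rle_dec.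
  - replace p with 0 by lra. now rewrite sqrt_0.
  - replace (1/2) with (/2) by field. apply Rpower_sqrt. lra.
Qed.

Lemma pw_mul_compl (p l : R) : 0 <= p -> pw p l * pw p (1 - l) = p.
Proof.
  intro Hp. unfold pw. destruct Rle_dec; [lra|].
  rewrite <- Rpower_plus. replace (l + (1 - l)) with 1 by ring. apply Rpower_1. lra.
Qed.

Lemma pw_mul_pw_compl_le (p q l : R) :
  0 <= p -> 0 <= q -> 0 <= l <= 1 -> pw p l * pw q (1 - l) <= Rmax p q.
Proof.
  intros Hp Hq Hl. unfold pw at 1. destruct (Rle_dec p 0).
  { rewrite Rmult_0_l. apply (Rle_trans _ p); [lra|apply Rmax_l]. }
  rewrite <- (pw_mul_compl (Rmax p q) l) by (apply (Rle_trans _ p); [lra|apply Rmax_l]).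
  rewrite !(pw_pos_eq (Rmax p q)) by (apply (Rlt_le_trans _ p); [lra|apply Rmax_l]).
  apply Rmult_le_compat; try apply pw_nonneg; [left; apply exp_pos| |].
  - apply Rle_Rpower_l; [lra|]. split; [lra|apply Rmax_l].
  - unfold pw. destruct Rle_dec; [left; apply exp_pos|].
    apply Rle_Rpower_l; [lra|]. split; [lra|apply Rmax_r].
Qed.

Lemma pw_continuity (p : R) (h : R -> R) : continuity h -> continuity (fun l => pw p (h l)).
Proof.
  intro Hh. unfold pw. destruct (Rle_dec p 0).
  - apply continuity_const. intros ? ?. reflexivity.
  - unfold Rpower. reg.
Qed.

(* [clamp l] is [l] truncated to [[0,1]]; through it the Chernoff sum becomes a
   continuous function on all of [R], dominated by [P + Q] everywhere. *)
Definition clamp (l : R) : R := (Rabs l - Rabs (l - 1) + 1) / 2.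

Lemma clamp_range (l : R) : 0 <= clamp l <= 1.
Proof. unfold clamp. split_Rabs; lra. Qed.

Lemma clamp_id (l : R) : 0 <= l <= 1 -> clamp l = l.
Proof. intro Hl. unfold clamp. split_Rabs; lra. Qed.

Lemma clamp_continuity : continuity clamp.
Proof. unfold clamp. reg. Qed.

Section ChernoffSum.

Variables P Q : nat -> R.
Hypotheses (HP : is_distr P) (HQ : is_distr Q).

Definition chernoff_term (x : nat) (l : R) : R :=
  pw (P x) (clamp l) * pw (Q x) (1 - clamp l).

Lemma chernoff_term_bound (x : nat) (l : R) : Rabs (chernoff_term x l) <= P x + Q x.
Proof.
  destruct HP as [HP0 _], HQ as [HQ0 _].
  rewrite Rabs_pos_eq by (apply Rmult_le_pos; apply pw_nonneg).
  apply (Rle_trans _ (Rmax (P x) (Q x))).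
  - apply pw_mul_pw_compl_le; auto. apply clamp_range.
  - apply Rmax_case; specialize (HP0 x); specialize (HQ0 x); lra.
Qed.

Lemma infinite_sum_distr_add : infinite_sum (fun x => P x + Q x) 2.
Proof.
  replace 2 with (1 * 1 + 1 * 1) by ring.
  apply (infinite_sum_ext (fun x => 1 * P x + 1 * Q x)); [intro; ring|].
  apply infinite_sum_lincomb; [apply HP|apply HQ].
Qed.

Lemma chernoff_term_CVN : CVN_R chernoff_term.
Proof.
  destruct HP as [HP0 _], HQ as [HQ0 _].
  intro r. exists (fun x => P x + Q x), 2. split.
  - apply (infinite_sum_ext (fun x => P x + Q x)); [|exact infinite_sum_distr_add].
    intro x. symmetry. apply Rabs_pos_eq. specialize (HP0 x); specialize (HQ0 x); lra.
  - intros x l _. apply chernoff_term_bound.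
Qed.

Definition chernoff_sum : R -> R := SFL chernoff_term (CVN_R_CVS _ chernoff_term_CVN).

Lemma chernoff_sum_continuity : continuity chernoff_sum.
Proof.
  apply SFL_continuity; [exact chernoff_term_CVN|].
  intro x. apply (continuity_mult (fun l => pw (P x) (clamp l)) (fun l => pw (Q x) (1 - clamp l)));
    apply pw_continuity; [exact clamp_continuity|].
  apply continuity_minus; [apply derivable_continuous, derivable_const|exact clamp_continuity].
Qed.

Lemma is_bsum_chernoff_sum (l : R) : 0 <= l <= 1 -> is_bsum P Q l (chernoff_sum l).
Proof.
  intro Hl. unfold chernoff_sum, SFL. destruct (CVN_R_CVS _ chernoff_term_CVN l) as [b Hb].
  apply (infinite_sum_ext (fun x => chernoff_term x l)); [|exact Hb].
  intro x. unfold chernoff_term. now rewrite clamp_id.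
Qed.

Lemma infinite_sum_bhattacharyya :
  infinite_sum (fun x => sqrt (P x) * sqrt (Q x)) (chernoff_sum (1/2)).
Proof.
  destruct HP as [HP0 _], HQ as [HQ0 _].
  apply (infinite_sum_ext (fun x => pw (P x) (1/2) * pw (Q x) (1 - 1/2))).
  - intro x. replace (1 - 1/2) with (1/2) by field. now rewrite !pw_half.
  - apply is_bsum_chernoff_sum. lra.
Qed.

Lemma is_chernoff_le_bhattacharyya :
  exists m, 0 <= m <= chernoff_sum (1/2) /\ is_chernoff P Q (neglog m).
Proof.
  destruct (continuity_ab_min chernoff_sum 0 1) as [lm [Hmin Hlm]];
    [lra|intros; apply chernoff_sum_continuity|].
  exists (chernoff_sum lm). split; [split|].
  - apply (infinite_sum_nonneg (fun x => chernoff_term x lm)).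
    + intro x. apply Rmult_le_pos; apply pw_nonneg.
    + unfold chernoff_sum, SFL. now destruct (CVN_R_CVS _ chernoff_term_CVN lm).
  - apply Hmin. lra.
  - exists (chernoff_sum lm). split; [|split; [|reflexivity]].
    + exists lm. split; [exact Hlm|]. now apply is_bsum_chernoff_sum.
    + intros l b Hl Hb. rewrite (uniqueness_sum _ _ _ Hb (is_bsum_chernoff_sum l Hl)). auto.
Qed.

End ChernoffSum.

Lemma two_sqrt_mul_le_add (x y : R) : 0 <= x -> 0 <= y -> 2 * sqrt (x * y) <= x + y.
Proof.
  intros Hx Hy. rewrite sqrt_mult_alt by exact Hx.
  pose proof (sqrt_sqrt x Hx). pose proof (sqrt_sqrt y Hy).
  pose proof (pow2_ge_0 (sqrt x - sqrt y)). nra.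
Qed.

Lemma bhattacharyya_le_1 (P Q : nat -> R) (BC : R) :
  is_distr P -> is_distr Q -> infinite_sum (fun x => sqrt (P x) * sqrt (Q x)) BC -> BC <= 1.
Proof.
  intros [HP0 HP1] [HQ0 HQ1] HBC.
  replace 1 with (/2 * 1 + /2 * 1) by field.
  refine (infinite_sum_le _ _ _ _ _ HBC (infinite_sum_lincomb _ _ _ _ (/2) (/2) HP1 HQ1)).
  intro x. rewrite <- sqrt_mult_alt by apply HP0.
  pose proof (two_sqrt_mul_le_add (P x) (Q x) (HP0 x) (HQ0 x)). lra.
Qed.

Lemma abs_sub_le_sqrt_bound (p q t : R) : 0 <= p -> 0 <= q -> 0 < t ->
  Rabs (p - q) <= (t + /t) / 2 * (p + q) + (/t - t) * (sqrt p * sqrt q).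
Proof.
  intros Hp Hq Ht.
  rewrite <- (sqrt_sqrt p Hp), <- (sqrt_sqrt q Hq) at 1 2.
  pose proof (sqrt_positivity p Hp). pose proof (sqrt_positivity q Hq).
  set (a := sqrt p) in *. set (b := sqrt q) in *.
  (* AM-GM: 2 |a - b| (a + b) <= t (a - b)^2 + (a + b)^2 / t *)
  assert (Hsq : 0 <= (t * Rabs (a - b) - (a + b)) ^ 2) by apply pow2_ge_0.
  assert (Hab : Rabs (a - b) ^ 2 = (a - b) ^ 2) by apply pow2_abs.
  replace (a * a - b * b) with ((a - b) * (a + b)) by ring.
  rewrite Rabs_mult, (Rabs_pos_eq (a + b)) by lra.
  apply (Rmult_le_reg_r t); [exact Ht|].
  replace (((t + /t) / 2 * (a * a + b * b) + (/t - t) * (a * b)) * t)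
    with ((t * t * (a - b) ^ 2 + (a + b) ^ 2) / 2) by (field; lra).
  nra.
Qed.

Lemma sq_le_mul_of_forall_pos (a b c : R) : 0 <= a -> 0 <= b -> 0 <= c ->
  (forall t, 0 < t -> 2 * c <= t * a + b / t) -> c ^ 2 <= a * b.
Proof.
  intros Ha Hb Hc Hbound. destruct (Req_dec c 0) as [->|Hc0]; [|destruct (Req_dec a 0) as [->|Ha0]].
  - simpl. nra.
  - specialize (Hbound ((b + 1) / c) ltac:(apply Rdiv_lt_0_compat; lra)).
    replace (b / ((b + 1) / c)) with (c - c / (b + 1)) in Hbound by (field; lra).
    assert (0 < c / (b + 1)) by (apply Rdiv_lt_0_compat; lra). lra.
  - specialize (Hbound (c / a) ltac:(apply Rdiv_lt_0_compat; lra)).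
    replace (c / a * a) with c in Hbound by (field; lra).
    replace (b / (c / a)) with (a * b / c) in Hbound by (field; lra).
    assert (Hcab : c * c <= a * b / c * c) by (apply Rmult_le_compat_r; lra).
    replace (a * b / c * c) with (a * b) in Hcab by (field; lra). simpl. lra.
Qed.

Lemma le_cam (P Q : nat -> R) (BC s : R) :
  is_distr P -> is_distr Q ->
  infinite_sum (fun x => sqrt (P x) * sqrt (Q x)) BC ->
  infinite_sum (fun x => Rabs (P x - Q x)) s ->
  (s / 2) ^ 2 <= (1 - BC) * (1 + BC).
Proof.
  intros HP HQ HBC Hs.
  apply sq_le_mul_of_forall_pos.
  - pose proof (bhattacharyya_le_1 P Q BC HP HQ HBC). lra.
  - enough (0 <= BC) by lra.
    apply (infinite_sum_nonneg _ _ (fun x => Rmult_le_pos _ _ (sqrt_pos _) (sqrt_pos _)) HBC).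
  - enough (0 <= s) by lra.
    apply (infinite_sum_nonneg _ _ (fun x => Rabs_pos _) Hs).
  - intros t Ht.
    replace (t * (1 - BC) + (1 + BC) / t) with ((t + /t) / 2 * 2 + (/t - t) * BC) by (field; lra).
    replace (2 * (s / 2)) with s by field.
    refine (infinite_sum_le _ _ _ _ _ Hs
             (infinite_sum_lincomb _ _ _ _ ((t + /t) / 2) (/t - t) (infinite_sum_distr_add P Q HP HQ) HBC)).
    intro x. apply abs_sub_le_sqrt_bound; [apply HP|apply HQ|exact Ht].
Qed.

Lemma tv_bound_le_neglog (d m : R) : 0 <= m -> m ^ 2 <= 1 - d ^ 2 -> ER_le (tv_bound d) (neglog m).
Proof.
  intros Hm Hmd. unfold tv_bound, neglog.
  destruct (Rle_dec m 0); [destruct (Rle_dec (1 - d ^ 2) 0); exact I|].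
  destruct (Rle_dec (1 - d ^ 2) 0); [nra|]. simpl.
  assert (Hln : ln (m ^ 2) <= ln (1 - d ^ 2)).
  { destruct (Rle_lt_or_eq_dec _ _ Hmd) as [Hlt|Heq]; [|rewrite Heq; lra].
    left. apply ln_increasing; [nra|exact Hlt]. }
  rewrite ln_pow in Hln by lra. simpl in Hln. lra.
Qed.

Lemma tv_bound_eq_neglog (d m : R) : 0 < m -> m ^ 2 = 1 - d ^ 2 -> tv_bound d = neglog m.
Proof.
  intros Hm Hmd. unfold tv_bound, neglog. rewrite <- Hmd.
  destruct (Rle_dec (m ^ 2) 0); [nra|]. destruct (Rle_dec m 0); [lra|].
  rewrite ln_pow by lra. simpl. f_equal. field.
Qed.

Definition two_point (a b : R) (n : nat) : R :=
  match n with 0 => a | 1 => b | _ => 0 end.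

Lemma two_point_supp2 (a b : R) (n : nat) : (2 <= n)%nat -> two_point a b n = 0.
Proof. intro Hn. destruct n as [|[|n]]; [lia|lia|reflexivity]. Qed.

Lemma is_distr_two_point (a b : R) : 0 <= a -> 0 <= b -> a + b = 1 -> is_distr (two_point a b).
Proof.
  intros Ha Hb Hab. split; [intros [|[|n]]; simpl; lra|].
  rewrite <- Hab. apply (infinite_sum_supp2 (two_point a b)), two_point_supp2.
Qed.

Lemma is_tv_two_point (a b : R) :
  is_tv (two_point a b) (two_point b a) (Rabs (a - b)).
Proof.
  exists (2 * Rabs (a - b)). split; [|field].
  replace (2 * Rabs (a - b)) with (Rabs (a - b) + Rabs (b - a)) by (rewrite Rabs_minus_sym; ring).
  apply (infinite_sum_supp2 (fun x => Rabs (two_point a b x - two_point b a x))).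
  intros n Hn. rewrite !two_point_supp2 by exact Hn. rewrite Rminus_diag. apply Rabs_R0.
Qed.

Lemma is_chernoff_two_point (a b : R) : 0 <= a -> 0 <= b ->
  is_chernoff (two_point a b) (two_point b a) (neglog (2 * sqrt (a * b))).
Proof.
  intros Ha Hb.
  assert (Hbsum : forall l, is_bsum (two_point a b) (two_point b a) l
                              (pw a l * pw b (1 - l) + pw b l * pw a (1 - l))).
  { intro l. apply (infinite_sum_supp2 (fun x => pw (two_point a b x) l * pw (two_point b a x) (1 - l))).
    intros n Hn. rewrite two_point_supp2 by exact Hn. unfold pw. destruct Rle_dec; [ring|lra]. }
  exists (2 * sqrt (a * b)). split; [|split; [|reflexivity]].
  - exists (1/2). split; [lra|].
    replace (2 * sqrt (a * b)) with (pw a (1/2) * pw b (1 - 1/2) + pw b (1/2) * pw a (1 - 1/2)).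
    + apply Hbsum.
    + replace (1 - 1/2) with (1/2) by field. rewrite !pw_half, sqrt_mult_alt by auto. ring.
  - intros l s _ Hs. rewrite (uniqueness_sum _ _ _ Hs (Hbsum l)).
    replace (a * b) with ((pw a l * pw b (1 - l)) * (pw b l * pw a (1 - l))).
    + apply two_sqrt_mul_le_add; apply Rmult_le_pos; apply pw_nonneg.
    + transitivity ((pw a l * pw a (1 - l)) * (pw b l * pw b (1 - l))); [ring|].
      now rewrite !pw_mul_compl.
Qed.

Theorem corollary1 :
  (forall (P Q : nat -> R) (d : R),
      is_distr P -> is_distr Q -> is_tv P Q d ->
      exists c, is_chernoff P Q c /\ ER_le (tv_bound d) c) /\
  (forall eps : R, 0 <= eps < 1 ->
      exists P Q : nat -> R,
        is_distr P /\ is_distr Q /\ is_tv P Q eps /\ is_chernoff P Q (tv_bound eps)).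
Proof.
  split.
  - intros P Q d HP HQ [s [Hs ->]].
    destruct (is_chernoff_le_bhattacharyya P Q HP HQ) as [m [Hm Hc]].
    pose proof (le_cam P Q _ s HP HQ (infinite_sum_bhattacharyya P Q HP HQ) Hs).
    exists (neglog m). split; [exact Hc|].
    apply tv_bound_le_neglog; [lra|nra].
  - intros eps He.
    set (a := (1 + eps) / 2). set (b := (1 - eps) / 2).
    exists (two_point a b), (two_point b a).
    split; [|split; [|split]].
    + apply is_distr_two_point; unfold a, b; lra.
    + apply is_distr_two_point; unfold a, b; lra.
    + replace eps with (Rabs (a - b)) by (unfold a, b; split_Rabs; lra).
      apply is_tv_two_point.
    + rewrite (tv_bound_eq_neglog eps (2 * sqrt (a * b))).
      * apply is_chernoff_two_point; unfold a, b; lra.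
      * apply Rmult_lt_0_compat; [lra|]. apply sqrt_lt_R0. unfold a, b. nra.
      * rewrite Rpow_mult_distr, pow2_sqrt by (unfold a, b; nra). unfold a, b. field.
Qed.
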